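(* For $\rho>0$ let $\upsilon(\rho)=\sqrt{\frac{1+\sqrt{1+\rho^2}}{2}}$ and $E(\rho)=\frac12\left(\arccos\frac{1}{\upsilon(\rho)}-\frac{2(\upsilon(\rho)-1)}{\rho}\right)$. Then for all $\rho>0$, \[E(\rho)\geq \frac18\rho-\frac{5}{384}\rho^3,\] and moreover \[E(\rho)=\frac{\pi}{4}-\frac{\beta}{2}-\frac{\sin 2\beta}{4(1+\sin\beta)},\quad\text{where } \beta=\arcsin\frac{1}{\upsilon(\rho)}.\] *)

From Stdlib Require Import Reals.
Open Scope R_scope.

Definition upsilon (rho : R) : R := sqrt ((1 + sqrt (1 + rho ^ 2)) / 2).

Definition Efun (rho : R) : R :=
  / 2 * (acos (/ upsilon rho) - 2 * (upsilon rho - 1) / rho).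

(* Put u = upsilon rho > 1 and t = sqrt (u^2 - 1).  Then rho = 2 u t and
   acos (1/u) = atan t, so E becomes an explicit function of u.  The lower
   bound combines atan t >= t - t^3/3 with a polynomial inequality in u - 1;
   the closed form comes from sin beta = 1/u, cos beta = t/u and
   acos (1/u) = PI/2 - beta. *)
From Stdlib Require Import Reals Lra Psatz.
Open Scope R_scope.

Lemma atan_ge_cubic (t : R) : 0 <= t -> t - t ^ 3 / 3 <= atan t.
Proof.
intros [Ht | <-]; [|rewrite atan_0; lra].
set (f := fun x => atan x - (x - x ^ 3 / 3)).
assert (Df : forall c, derivable_pt_lim f c (/ (1 + c ^ 2) - (1 - INR 3 * c ^ pred 3 * / 3))).
{ intro c; unfold f.
  apply derivable_pt_lim_minus; [apply derivable_pt_lim_atan|].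
  apply derivable_pt_lim_minus; [apply derivable_pt_lim_id|].
  apply derivable_pt_lim_scal_right, derivable_pt_lim_pow. }
destruct (MVT_cor2 f _ 0 t ltac:(lra) (fun c _ => Df c)) as [c [Hfc _]].
assert (f0 : f 0 = 0) by (unfold f; rewrite atan_0; lra).
assert (Hd : 0 <= / (1 + c ^ 2) - (1 - INR 3 * c ^ pred 3 * / 3)).
{ replace (/ (1 + c ^ 2) - (1 - INR 3 * c ^ pred 3 * / 3)) with (c ^ 4 / (1 + c ^ 2)) by (simpl; field; nra).
  apply Rmult_le_pos; [nra | apply Rlt_le, Rinv_0_lt_compat; nra]. }
unfold f in Hfc, f0; nra.
Qed.

Lemma sqrt_one_minus_inv_sqr (u : R) : 1 < u ->
  sqrt (1 - (/ u)²) = sqrt (u ^ 2 - 1) / u.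
Proof.
intros Hu.
replace (1 - (/ u)²) with ((u ^ 2 - 1) * (/ u)²) by (unfold Rsqr; field; lra).
rewrite sqrt_mult_alt, sqrt_Rsqr; [reflexivity | |nra].
apply Rlt_le, Rinv_0_lt_compat; lra.
Qed.

Lemma acos_inv_atan (u : R) : 1 < u -> acos (/ u) = atan (sqrt (u ^ 2 - 1)).
Proof.
intros Hu.
rewrite acos_atan, sqrt_one_minus_inv_sqr by (try apply Rinv_0_lt_compat; lra).
f_equal; field; lra.
Qed.

Lemma one_lt_sqrt (x : R) : 1 < x -> 1 < sqrt x.
Proof.
intros Hx; rewrite <- sqrt_1 at 1; apply sqrt_lt_1_alt; lra.
Qed.

Lemma upsilon_gt_1 (rho : R) : 0 < rho -> 1 < upsilon rho.
Proof.
intros Hr; apply one_lt_sqrt.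
enough (1 < sqrt (1 + rho ^ 2)) by lra.
apply one_lt_sqrt; nra.
Qed.

Lemma rho_eq_upsilon (rho : R) : 0 < rho ->
  rho = 2 * upsilon rho * sqrt (upsilon rho ^ 2 - 1).
Proof.
intros Hr.
assert (Hu1 := upsilon_gt_1 rho Hr).
assert (Hw : sqrt (1 + rho ^ 2) ^ 2 = 1 + rho ^ 2) by (apply pow2_sqrt; nra).
assert (Hu : upsilon rho ^ 2 = (1 + sqrt (1 + rho ^ 2)) / 2).
{ apply pow2_sqrt; pose proof (sqrt_pos (1 + rho ^ 2)); lra. }
assert (Ht : sqrt (upsilon rho ^ 2 - 1) ^ 2 = upsilon rho ^ 2 - 1) by (apply pow2_sqrt; nra).
assert (Ht0 := sqrt_pos (upsilon rho ^ 2 - 1)).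
apply Rsqr_inj; [lra | nra |].
set (u := upsilon rho) in *; set (t := sqrt (u ^ 2 - 1)) in *;
  set (w := sqrt (1 + rho ^ 2)) in *.
unfold Rsqr; nra.
Qed.

Lemma cubic_bound_algebraic (u t : R) : 1 < u -> 0 < t -> t ^ 2 = u ^ 2 - 1 ->
  / 8 * (2 * u * t) - 5 / 384 * (2 * u * t) ^ 3
    <= / 2 * ((t - t ^ 3 / 3) - 2 * (u - 1) / (2 * u * t)).
Proof.
intros Hu Ht Ht2.
set (v := u - 1).
(* Eliminating t^2 = u^2 - 1 from 48 u t times the gap leaves (u-1)^3 times a
   polynomial in u - 1 with positive coefficients. *)
assert (Hgap : / 2 * ((t - t ^ 3 / 3) - 2 * (u - 1) / (2 * u * t))
    - (/ 8 * (2 * u * t) - 5 / 384 * (2 * u * t) ^ 3)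
  = v ^ 3 * (12 + 153 * v + 212 * v ^ 2 + 130 * v ^ 3 + 40 * v ^ 4 + 5 * v ^ 5)
    / (48 * u * t)).
{ transitivity ((24 * u * t ^ 2 - 8 * u * (t ^ 2) ^ 2 - 24 * (u - 1)
                 - 12 * u ^ 2 * t ^ 2 + 5 * u ^ 4 * (t ^ 2) ^ 2) / (48 * u * t)).
  - field; lra.
  - rewrite Ht2; unfold v; f_equal; ring. }
assert (0 <= v ^ 3 * (12 + 153 * v + 212 * v ^ 2 + 130 * v ^ 3 + 40 * v ^ 4 + 5 * v ^ 5)
              / (48 * u * t)).
{ apply Rmult_le_pos; [|apply Rlt_le, Rinv_0_lt_compat; nra].
  apply Rmult_le_pos; [apply pow_le; unfold v; lra|].
  assert (0 <= v) by (unfold v; lra); nra. }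
unfold v in *; lra.
Qed.

Definition E_upsilon (u : R) : R :=
  / 2 * (acos (/ u) - 2 * (u - 1) / (2 * u * sqrt (u ^ 2 - 1))).

Lemma Efun_E_upsilon (rho : R) : 0 < rho -> Efun rho = E_upsilon (upsilon rho).
Proof.
intros Hr; unfold Efun, E_upsilon.
rewrite <- (rho_eq_upsilon rho Hr); reflexivity.
Qed.

Lemma E_upsilon_lower_bound (u : R) : 1 < u ->
  / 8 * (2 * u * sqrt (u ^ 2 - 1)) - 5 / 384 * (2 * u * sqrt (u ^ 2 - 1)) ^ 3
    <= E_upsilon u.
Proof.
intros Hu; unfold E_upsilon; rewrite acos_inv_atan by exact Hu.
set (t := sqrt (u ^ 2 - 1)).
assert (Ht2 : t ^ 2 = u ^ 2 - 1) by (apply pow2_sqrt; nra).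
assert (Ht : 0 < t) by (apply sqrt_lt_R0; nra).
assert (Hatan := atan_ge_cubic t (Rlt_le _ _ Ht)).
assert (Hgap := cubic_bound_algebraic u t Hu Ht Ht2).
lra.
Qed.

Lemma E_upsilon_closed_form (u : R) : 1 < u ->
  let beta := asin (/ u) in
  E_upsilon u = PI / 4 - beta / 2 - sin (2 * beta) / (4 * (1 + sin beta)).
Proof.
intros Hu beta.
assert (Hinv : -1 <= / u <= 1).
{ assert (/ u < 1) by (rewrite <- Rinv_1; apply Rinv_lt_contravar; lra).
  assert (0 < / u) by (apply Rinv_0_lt_compat; lra); lra. }
assert (Hsin : sin beta = / u) by (apply sin_asin, Hinv).
assert (Hcos : cos beta = sqrt (u ^ 2 - 1) / u).
{ unfold beta; rewrite cos_asin by exact Hinv; apply sqrt_one_minus_inv_sqr, Hu. }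
unfold E_upsilon; rewrite (acos_asin _ Hinv); fold beta.
rewrite sin_2a, Hsin, Hcos.
set (t := sqrt (u ^ 2 - 1)).
assert (Ht : 0 < t) by (apply sqrt_lt_R0; nra).
assert (Ht2 : t ^ 2 = u ^ 2 - 1) by (apply pow2_sqrt; nra).
replace (2 * (u - 1)) with (2 * t ^ 2 / (u + 1)) by (rewrite Ht2; field; lra).
field; lra.
Qed.

Theorem lemma3p3 : forall rho : R, 0 < rho ->
  Efun rho >= / 8 * rho - 5 / 384 * rho ^ 3 /\
  (let beta := asin (/ upsilon rho) in
   Efun rho = PI / 4 - beta / 2 - sin (2 * beta) / (4 * (1 + sin beta))).
Proof.
intros rho Hr.
assert (Hu := upsilon_gt_1 rho Hr).
assert (Hrho := rho_eq_upsilon rho Hr).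
rewrite (Efun_E_upsilon rho Hr).
set (u := upsilon rho) in *.
split.
- rewrite Hrho; apply Rle_ge, E_upsilon_lower_bound, Hu.
- apply E_upsilon_closed_form, Hu.
Qed.
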